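(* Let $d,n\ge 1$, let $\mathbf{x}_1,\ldots,\mathbf{x}_n\in\mathbb{R}^d$ (column vectors), $y_1,\ldots,y_n\in\mathbb{R}$, $\eta>0$, and $\mathbf{w}^{(0)}\in\mathbb{R}^{1\times d}$ arbitrary. Consider the linear self-attention layer acting on a sequence $(\mathbf{z}_1,\ldots,\mathbf{z}_n)$ of vectors in $\mathbb{R}^{d+1}$ by $$\mathbf{z}_j\leftarrow \mathbf{z}_j+\mathbf{P}\mathbf{V}\sum_{i=1}^n \mathbf{z}_i\left(\mathbf{z}_i^\top\mathbf{K}^\top\mathbf{Q}\mathbf{z}_j\right),\qquad j=1,\ldots,n,$$ with parameters $$\mathbf{K}=\mathbf{Q}=\begin{pmatrix}\mathbf{I}_{d\times d}&\mathbf{0}\\ 0&0\end{pmatrix},\quad \mathbf{V}=\begin{pmatrix}\mathbf{0}_{d\times d}&\mathbf{0}\\ \mathbf{w}^{(0)}&-1\end{pmatrix},\quad \mathbf{P}=\frac{\eta}{n}\mathbf{I}.$$ Apply $l$ such layers in succession (all with these same parameters) to the input $\mathbf{z}_j^{(0)}=(\mathbf{x}_j^\top,y_j)^\top$, $j=1,\ldots,n$, and denote by $\mathbf{z}_j^{(l)}$ the output of the $l$-th layer. Define $\mathbf{w}^{(l)}$ for $l\ge1$ by $$\mathbf{w}^{(l)}=\mathbf{w}^{(l-1)}+\frac{\eta}{n}\sum_{i=1}^n\left(y_i-\mathbf{w}^{(l-1)}\mathbf{x}_i\right)\mathbf{x}_i^\top.$$ Then for every $l\ge 0$ and every $j$,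 $\mathbf{z}_j^{(l)}=(\mathbf{x}_j^\top,\delta_j^{(l)})^\top$ where $\delta_j^{(l)}=y_j-(\mathbf{w}^{(l)}-\mathbf{w}^{(0)})\mathbf{x}_j$.
   Context: Weight vectors are $1\times d$ row vectors and inputs are $d\times 1$ column vectors, so $\mathbf{w}\mathbf{x}_i$ is a scalar. The recursion for $\mathbf{w}^{(l)}$ is gradient descent with step size $\eta$, started at $\mathbf{w}^{(0)}$, on the least-squares loss $\frac{1}{2n}\sum_{i=1}^n(\mathbf{w}\mathbf{x}_i-y_i)^2$. *)

From HB Require Import structures.
From mathcomp Require Import all_boot all_order all_algebra.
From mathcomp Require Import reals.
Set Implicit Arguments. Unset Strict Implicit. Unset Printing Implicit Defensive.
Import Order.TTheory GRing.Theory Num.Theory.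
Local Open Scope ring_scope.

Section LSA.
Variables (R : realType) (d n : nat).

Definition KQ_mx : 'M[R]_(d + 1) := block_mx (1%:M : 'M[R]_d) 0 0 0.

Definition V_mx (w0 : 'rV[R]_d) : 'M[R]_(d + 1) :=
  block_mx (0 : 'M[R]_d) 0 w0 (-1)%:M.

Definition P_mx (eta : R) : 'M[R]_(d + 1) := (eta / n%:R) *: 1%:M.

Definition lsa_layer (P V K Q : 'M[R]_(d + 1))
    (z : 'I_n -> 'cV[R]_(d + 1)) : 'I_n -> 'cV[R]_(d + 1) :=
  fun j => z j + P *m V *m
     (\sum_(i < n) (((z i)^T *m K^T *m Q *m z j) 0 0) *: z i).

Definition lsa_iter (eta : R) (w0 : 'rV[R]_d) (l : nat)
    (z : 'I_n -> 'cV[R]_(d + 1)) : 'I_n -> 'cV[R]_(d + 1) :=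
  iter l (lsa_layer (P_mx eta) (V_mx w0) KQ_mx KQ_mx) z.

Definition lsa_input (x : 'I_n -> 'cV[R]_d) (y : 'I_n -> R) :
    'I_n -> 'cV[R]_(d + 1) :=
  fun j => col_mx (x j) (y j)%:M.

Definition gd_step (eta : R) (x : 'I_n -> 'cV[R]_d) (y : 'I_n -> R)
    (w : 'rV[R]_d) : 'rV[R]_d :=
  w + (eta / n%:R) *: \sum_(i < n) (y i - (w *m x i) 0 0) *: (x i)^T.

Definition gd_iter (eta : R) (x : 'I_n -> 'cV[R]_d) (y : 'I_n -> R)
    (w0 : 'rV[R]_d) (l : nat) : 'rV[R]_d :=
  iter l (gd_step eta x y) w0.

End LSA.

From HB Require Import structures.
From mathcomp Require Import all_boot all_order all_algebra.
From mathcomp Require Import reals.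
From mathcomp Require Import ring.
Set Implicit Arguments. Unset Strict Implicit. Unset Printing Implicit Defensive.
Import Order.TTheory GRing.Theory Num.Theory.
Local Open Scope ring_scope.

(* Every layer keeps the first d coordinates of each token and changes only
   the last one, delta_j.  The key-query product reads off the score
   x_i^T x_j, and V sends the token (x_i, delta_i) to (0, w0 x_i - delta_i).
   If delta_i = y_i - (w - w0) x_i, then w0 x_i - delta_i = w x_i - y_i is
   the residual of w, so the layer subtracts from delta_j exactly the
   gradient-descent increment (gd_step w - w) x_j; induct on l. *)

Lemma sum_col_mx (V : nmodType) (I : Type) (r : seq I) (P : pred I) m1 m2 n
    (A : I -> 'M[V]_(m1, n)) (B : I -> 'M[V]_(m2, n)) :
  \sum_(i <- r | P i) col_mx (A i) (B i) =
  col_mx (\sum_(i <- r | P i) A i) (\sum_(i <- r | P i) B i).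
Proof.
elim: r => [|i r IHr]; first by rewrite !big_nil col_mx0.
by rewrite !big_cons; case: (P i); rewrite ?IHr ?add_col_mx.
Qed.

Lemma mulmxBl_entry (R : ringType) m n p (A B : 'M[R]_(m, n)) (C : 'M_(n, p))
    i j :
  ((A - B) *m C) i j = (A *m C) i j - (B *m C) i j.
Proof. by rewrite mulmxBl !mxE. Qed.

Section Tokens.
Variables (R : realType) (d n : nat).
Implicit Types (a b : 'cV[R]_d) (s t : R) (w : 'rV[R]_d).

Lemma KQ_mx_score a b s t :
  ((col_mx a s%:M)^T *m (KQ_mx R d)^T *m KQ_mx R d *m col_mx b t%:M) 0 0
  = (a^T *m b) 0 0.
Proof.
rewrite -!mulmxA /KQ_mx tr_block_mx !trmx0 trmx1.
rewrite !mul_block_col !mul0mx !mul1mx !addr0.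
by rewrite tr_col_mx mul_row_col mulmx0 addr0.
Qed.

Lemma V_mx_col_mx w a s :
  V_mx w *m col_mx a s%:M = col_mx 0 ((w *m a) 0 0 - s)%:M.
Proof.
rewrite /V_mx mul_block_col !mul0mx addr0; congr col_mx.
apply/matrixP => i j; rewrite !ord1 !mxE big_ord1 !mxE /=.
by rewrite !mulr1n mulN1r.
Qed.

Lemma lsa_layer_col_mx eta w0 (z : 'I_n -> 'cV[R]_(d + 1))
    (x : 'I_n -> 'cV[R]_d) (delta : 'I_n -> R) :
    (forall i, z i = col_mx (x i) (delta i)%:M) -> forall j,
  lsa_layer (P_mx d n eta) (V_mx w0) (KQ_mx R d) (KQ_mx R d) z j =
  col_mx (x j) (delta j + eta / n%:R *
    \sum_(i < n) ((x i)^T *m x j) 0 0 * ((w0 *m x i) 0 0 - delta i))%:M.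
Proof.
move=> hz j; rewrite /lsa_layer -mulmxA mulmx_sumr hz.
under eq_bigr => i _ do
  rewrite !hz KQ_mx_score -scalemxAr V_mx_col_mx scale_col_mx scaler0.
rewrite sum_col_mx big1 // /P_mx scalemx1 mul_scalar_mx scale_col_mx scaler0.
rewrite add_col_mx addr0; congr col_mx.
rewrite raddfD /= -scale_scalar_mx; congr (_ + _); congr (_ *: _).
by rewrite raddf_sum; apply: eq_bigr => i _; rewrite scale_scalar_mx.
Qed.

Lemma gd_step_increment eta (x : 'I_n -> 'cV[R]_d) (y : 'I_n -> R) w b :
  ((gd_step eta x y w - w) *m b) 0 0 =
  eta / n%:R * \sum_(i < n) (y i - (w *m x i) 0 0) * ((x i)^T *m b) 0 0.
Proof.
rewrite /gd_step addrAC subrr add0r -scalemxAl mulmx_suml mxE summxE.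
by congr (_ * _); apply: eq_bigr => i _; rewrite -scalemxAl mxE.
Qed.

End Tokens.

Theorem proposition6 (R : realType) (d n : nat) (hd : (1 <= d)%N) (hn : (1 <= n)%N)
    (x : 'I_n -> 'cV[R]_d) (y : 'I_n -> R) (eta : R) (heta : 0 < eta)
    (w0 : 'rV[R]_d) :
  forall (l : nat) (j : 'I_n),
    lsa_iter eta w0 l (lsa_input x y) j =
    col_mx (x j) (y j - ((gd_iter eta x y w0 l - w0) *m x j) 0 0)%:M.
Proof.
elim=> [|l IHl] j; first by rewrite /= subrr mul0mx mxE subr0.
rewrite [LHS](lsa_layer_col_mx eta w0 IHl); congr (col_mx _ _%:M).
set w := gd_iter eta x y w0 l.
have -> : gd_iter eta x y w0 l.+1 - w0 = (gd_step eta x y w - w) + (w - w0).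
  by rewrite addrA subrK.
rewrite [in RHS]mulmxDl [in RHS]mxE gd_step_increment.
have residual i : (w0 *m x i) 0 0 - (y i - ((w - w0) *m x i) 0 0) =
    - (y i - (w *m x i) 0 0).
  by rewrite mulmxBl_entry; ring.
under eq_bigr => i _ do rewrite residual mulrN mulrC.
by rewrite sumrN; ring.
Qed.
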